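(* Let $X,Y$ be real $m\times n$ matrices with $\|X\|_\infty\le1$ and $\|Y\|_\infty\le1$. Let $q\ge1$ be such that $\|X\|_*\le q\sqrt{mn}$ and $\|Y\|_*\le q\sqrt{mn}$. Let $\varepsilon\in(0,1)$. Then there exist $m\times n$ matrices $A,B$ with a simultaneous block structure having at most $(20000q^6\varepsilon^{-10})^{5q^2\varepsilon^{-2}}$ blocks, and permutations $\pi$ of $\{1,\dots,m\}$ and $\tau$ of $\{1,\dots,n\}$, such that $\|X^{\pi,\tau}-A\|_{\bar F}\le\varepsilon$ and $\|Y^{\pi,\tau}-B\|_{\bar F}\le\varepsilon$. Moreover, $A,B$ can be chosen with $\|A\|_\infty\le1$ and $\|B\|_\infty\le1$.
   Context: $\|A\|_\infty=\max_{i,j}|a_{ij}|$; $\|A\|_*$ is the sum of singular values; $\|A\|_{\bar F}=\big(\frac1{mn}\sum_{i,j}a_{ij}^2\big)^{1/2}$. $X^{\pi,\tau}$ is the matrix with $(i,j)$ entry $x_{\pi(i)\tau(j)}$. A matrix is a block matrix if its entries are constant on rectangular blocks, i.e. the set of rows is partitioned into consecutive intervals and the set of columns into consecutive intervals, and the matrix is constant on each product of a row interval with a column interval (these products are the blocks). Two matrices have a simultaneous block structure if both are block matrices with respect to the same row and column partitions. *)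

From HB Require Import structures.
From mathcomp Require Import all_boot all_order all_algebra all_fingroup.
From mathcomp Require Import boolp classical_sets reals exp.
Set Implicit Arguments. Unset Strict Implicit. Unset Printing Implicit Defensive.
Import Order.TTheory GRing.Theory Num.Theory.
Local Open Scope ring_scope.

Section Defs.
Variable R : realType.

(* max-entry norm ||A||_oo = max_{i,j} |a_ij| (0 for empty matrices) *)
Definition maxnorm m n (A : 'M[R]_(m, n)) : R :=
  \big[Num.max/0]_(i < m) \big[Num.max/0]_(j < n) `|A i j|.

Definition fbarnorm m n (A : 'M[R]_(m, n)) : R :=
  Num.sqrt ((m * n)%:R^-1 * \sum_(i < m) \sum_(j < n) A i j ^+ 2).

(* s is the list (with multiplicity) of the singular values of A :
   nonnegative reals whose squares are the eigenvalues (roots of the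
   characteristic polynomial, with multiplicity) of A^T A. *)
Definition is_singular_values m n (A : 'M[R]_(m, n)) (s : seq R) : Prop :=
  all (fun x => 0 <= x) s /\
  char_poly (A^T *m A) = \prod_(x <- s) ('X - (x ^+ 2)%:P).

Definition nucnorm m n (A : 'M[R]_(m, n)) : R :=
  \sum_(x <- xget [::] [set s | is_singular_values A s]) x.

Definition permmx m n (X : 'M[R]_(m, n)) (pi : {perm 'I_m}) (tau : {perm 'I_n})
  : 'M[R]_(m, n) := \matrix_(i, j) X (pi i) (tau j).

(* a labelling of 'I_m by interval indices that is nondecreasing: its
   fibres are consecutive intervals partitioning the index set *)
Definition interval_labelling m a (f : 'I_m -> 'I_a) : Prop :=
  forall i j : 'I_m, (i <= j)%N -> (f i <= f j)%N.

(* A and B have a simultaneous block structure with at most N blocks: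
   a common partition of the rows into (at most) a consecutive intervals and
   of the columns into (at most) b consecutive intervals, with a * b <= N,
   such that both A and B are constant on each block. *)
Definition simul_block_structure m n (A B : 'M[R]_(m, n)) (N : R) : Prop :=
  exists (a b : nat) (f : 'I_m -> 'I_a) (g : 'I_n -> 'I_b),
    [/\ interval_labelling f, interval_labelling g,
        (forall i i' j j', f i = f i' -> g j = g j' ->
            A i j = A i' j' /\ B i j = B i' j')
      & (a * b)%:R <= N].

End Defs.

(* Complexify G = X^T X and diagonalise it with a unitary matrix P.  The real
   and imaginary parts of the rows of P are real vectors v_p with
   X = sum_p (X v_p) v_p^T; the coefficient columns of direction l have total
   squared norm d_l, the l-th eigenvalue of G, and sum_l sqrt d_l = ||X||_*.
   Keeping the directions with d_l >= s^2 m n, s = 4 eps^2 / (5 q), leaves at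
   most 2 q / s terms and a squared error at most s q m n.  On the kept
   directions coefficients and vector entries are bounded, so rounding them to
   a grid of about 128 q^3 / eps^5 levels moves each entry by at most eps / 10,
   and clipping to [-1, 1] only helps.  Each row (column) is labelled by its rounded data
   for X and for Y; sorting rows and columns by label makes the label classes
   consecutive intervals, and counting labels bounds the number of blocks. *)

From HB Require Import structures.
From mathcomp Require Import all_boot all_order all_algebra all_fingroup.
From mathcomp Require Import boolp classical_sets reals exp.
From mathcomp Require Import ring lra.
From mathcomp Require complex spectral.
Import Order.TTheory GRing.Theory Num.Theory.
Set Implicit Arguments. Unset Strict Implicit. Unset Printing Implicit Defensive.
Local Open Scope ring_scope.

Lemma char_poly_similar (F : comNzRingType) n (Q P D : 'M[F]_n) :
  Q *m P = 1%:M -> char_poly (Q *m D *m P) = char_poly D.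
Proof.
move=> QP.
pose Qp := map_mx polyC Q; pose Pp := map_mx polyC P.
have QPp : Qp *m Pp = 1%:M by rewrite -map_mxM QP map_mx1.
have E : char_poly_mx (Q *m D *m P) = Qp *m char_poly_mx D *m Pp.
  rewrite /char_poly_mx !map_mxM mulmxBr mulmxBl -/Qp -/Pp.
  by congr (_ - _); rewrite scalar_mxC -mulmxA QPp mulmx1.
by rewrite /char_poly E !det_mulmx mulrAC -det_mulmx QPp det1 mul1r.
Qed.

Lemma sum_pair_bool (V : nmodType) (I : finType) (T : pred I) (F : I * bool -> V) :
  \sum_(p | T p.1) F p = \sum_(l | T l) (F (l, false) + F (l, true)).
Proof.
transitivity (\sum_(p | T p.1 && predT p.2) F (p.1, p.2)).
  by apply: eq_big => [[l c]|[l c] _] /=; rewrite ?andbT.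
rewrite -(pair_big T predT (fun l c => F (l, c))); apply: eq_bigr => l _.
by rewrite big_bool addrC.
Qed.

Section ComplexCoordinates.
Import complex Num.Def.
Variable R : rcfType.
Local Open Scope complex_scope.

Lemma Complex_sum (I : Type) (r : seq I) (F G : I -> R) :
  \sum_(i <- r) (F i +i* G i) = (\sum_(i <- r) F i) +i* (\sum_(i <- r) G i).
Proof.
elim: r => [|x r IH]; first by rewrite !big_nil.
by rewrite !big_cons IH.
Qed.

Lemma Complex_mul (a b c d : R) :
  (a +i* b) * (c +i* d) = (a * c - b * d) +i* (a * d + b * c).
Proof. by []. Qed.

Lemma Complex_conj (a b : R) : conjC (a +i* b) = a -i* b.
Proof. by []. Qed.

Lemma Complex_eta (z : R[i]) : z = Re z +i* Im z.
Proof. by case: z. Qed.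

End ComplexCoordinates.

Section GramSpectralFrame.
Import complex spectral Num.Def.
Variable R : realType.
Local Open Scope complex_scope.
Local Open Scope sesquilinear_scope.
Variables (m n : nat) (X : 'M[R]_(m, n)).

Let Xc : 'M[R[i]]_(m, n) := map_mx (real_complex R) X.
Let Gc := Xc^T *m Xc.
Let P := spectralmx Gc.
Let sp := spectral_diag Gc.

Definition gram_eig (l : 'I_n) : R := Re (sp 0 l).

(* The rows of the unitary [P] diagonalising [X^T X] split into real and
   imaginary parts; [frame (l, false)] and [frame (l, true)] are those of row [l]. *)
Definition frame (p : 'I_n * bool) (j : 'I_n) : R :=
  if p.2 then Im (P p.1 j) else Re (P p.1 j).

Definition frame_coef (i : 'I_m) (p : 'I_n * bool) : R := \sum_j X i j * frame p j.

Local Notation a l j := (frame (l, false) j).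
Local Notation b l j := (frame (l, true) j).
Local Notation wa i l := (frame_coef i (l, false)).
Local Notation wb i l := (frame_coef i (l, true)).

Let Xc_conj : map_mx conjC Xc = Xc.
Proof. by apply/matrixP => i j; rewrite !mxE; apply: conjc_real. Qed.

Let Xc_adj : Xc ^t* = Xc^T.
Proof. by apply/matrixP => i j; rewrite !mxE; apply: conjc_real. Qed.

Let Gc_spectral : Gc = P^t* *m diag_mx sp *m P.
Proof.
have Gc_normal : Gc \is normalmx.
  apply/normalmxP; suff -> : Gc ^t* = Gc by [].
  by rewrite /Gc trmx_mul trmxK map_mxM -map_trmx Xc_conj.
rewrite -invmx_unitary ?spectral_unitarymx //.
by move/orthomx_spectralP: Gc_normal.
Qed.

Let P_Pt : P *m P^t* = 1%:M.
Proof. exact/unitarymxP/spectral_unitarymx. Qed.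

Let Pt_P : P^t* *m P = 1%:M.
Proof. by rewrite -invmx_unitary ?spectral_unitarymx // mulVmx // spectral_unit. Qed.

Let W := Xc *m P^t*.

Let W_gram : W^t* *m W = diag_mx sp.
Proof.
rewrite /W trmx_mul map_mxM trmxCK Xc_adj mulmxA -(mulmxA P) -/Gc Gc_spectral.
by rewrite !mulmxA P_Pt mul1mx -!mulmxA P_Pt mulmx1.
Qed.

Let W_P : W *m P = Xc.
Proof. by rewrite /W -mulmxA Pt_P mulmx1. Qed.

Let trXc_W : Xc^T *m W = P^t* *m diag_mx sp.
Proof. by rewrite /W mulmxA -/Gc Gc_spectral -!mulmxA P_Pt mulmx1. Qed.

Let W_coord i l : W i l = wa i l -i* wb i l.
Proof.
rewrite /W !mxE /frame_coef -sumrN -Complex_sum; apply: eq_bigr => j _.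
rewrite !mxE [P l j]Complex_eta Complex_conj Complex_mul /frame /=.
by rewrite !mul0r subr0 addr0 mulrN.
Qed.

Lemma frame_expansion i j : X i j = \sum_p frame_coef i p * frame p j.
Proof.
have E : (W *m P) i j =
    (\sum_l (wa i l * a l j
             + wb i l * b l j))
    +i* (\sum_l (wa i l * b l j
                 - wb i l * a l j)).
  rewrite mxE -Complex_sum; apply: eq_bigr => l _.
  by rewrite W_coord [P l j]Complex_eta Complex_mul !mulNr opprK.
by move: (congr1 (@Re R) E); rewrite W_P /Xc mxE (sum_pair_bool predT).
Qed.

Let W_gram_entry l :
  \sum_i (wa i l ^+ 2 + wb i l ^+ 2) = gram_eig l
  /\ Im (sp 0 l) = 0.
Proof.
have E : (W^t* *m W) l l = (\sum_i (wa i l ^+ 2 + wb i l ^+ 2)) +i* (\sum_(i < m) 0).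
  rewrite mxE -Complex_sum; apply: eq_bigr => i _.
  have -> : (W^t* ) l i = conjC (W i l) by rewrite !mxE.
  rewrite W_coord Complex_conj opprK Complex_mul.
  by congr Complex; rewrite ?mulrN ?opprK // (mulrC (frame_coef i _)) addNr.
by rewrite W_gram mxE eqxx mulr1n big1_eq in E; rewrite /gram_eig E.
Qed.

Lemma sum_frame_coef_sqr l :
  \sum_i (wa i l ^+ 2 + wb i l ^+ 2) = gram_eig l.
Proof. exact: (W_gram_entry l).1. Qed.

Lemma sum_frame_coef_sqr_le p : \sum_i frame_coef i p ^+ 2 <= gram_eig p.1.
Proof.
rewrite -sum_frame_coef_sqr; apply: ler_sum => i _.
by case: p => l [] /=; rewrite ?lerDl ?lerDr sqr_ge0.
Qed.

Lemma gram_eig_ge0 l : 0 <= gram_eig l.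
Proof.
by rewrite -sum_frame_coef_sqr; apply: sumr_ge0 => i _; rewrite addr_ge0 ?sqr_ge0.
Qed.

Let sp_real l : sp 0 l = (gram_eig l)%:C.
Proof. by rewrite [sp 0 l]Complex_eta (W_gram_entry l).2. Qed.

Lemma frame_adjoint j p : \sum_i X i j * frame_coef i p = frame p j * gram_eig p.1.
Proof.
case: p => l c /=.
have E : (Xc^T *m W) j l = (\sum_i X i j * wa i l)
                          -i* (\sum_i X i j * wb i l).
  rewrite mxE -sumrN -Complex_sum; apply: eq_bigr => i _.
  have -> : Xc^T j i = (X i j)%:C by rewrite !mxE.
  by rewrite W_coord Complex_mul /= !mul0r subr0 addr0 mulrN.
rewrite trXc_W mul_mx_diag mxE sp_real !mxE [P l j]Complex_eta Complex_conj in E.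
rewrite Complex_mul /= in E; case: E => E1 E2.
case: c; last by rewrite -E1 /frame /=; ring.
by apply: oppr_inj; rewrite -E2 /frame /=; ring.
Qed.

Lemma sum_frame_sqr_le p : \sum_j frame p j ^+ 2 <= 1.
Proof.
have E : (P *m P^t* ) p.1 p.1 = (\sum_j (a p.1 j ^+ 2 + b p.1 j ^+ 2))
                               +i* (\sum_(j < n) 0).
  rewrite mxE -Complex_sum; apply: eq_bigr => j _.
  rewrite !mxE [P p.1 j]Complex_eta Complex_conj Complex_mul /frame /=.
  by congr Complex; ring.
move: (congr1 (@Re R) E); rewrite P_Pt mxE eqxx /= => /esym sum1.
rewrite -[X in _ <= X]sum1 big_split /=; clear E sum1; case: p => l [] /=.
- by rewrite lerDr sumr_ge0 // => j _; rewrite sqr_ge0.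
- by rewrite lerDl sumr_ge0 // => j _; rewrite sqr_ge0.
Qed.

Lemma frame_bessel i (T : pred 'I_n) :
  \sum_j (\sum_(p | T p.1) frame_coef i p * frame p j) ^+ 2
  <= \sum_(p | T p.1) frame_coef i p ^+ 2.
Proof.
(* The left side is [|Re (z P)|^2 <= |z P|^2 = |z|^2], for the row [z] of
   coefficients [W i l], [l] in [T], since [P] is unitary. *)
rewrite sum_pair_bool; under eq_bigr => j _ do rewrite sum_pair_bool.
pose z : 'rV[R[i]]_n := \row_l (if T l then W i l else 0).
pose x j := \sum_l (if T l then wa i l * a l j + wb i l * b l j else 0).
pose y j := \sum_l (if T l then wa i l * b l j - wb i l * a l j else 0).
have zP j : (z *m P) 0 j = x j +i* y j.
  rewrite mxE -Complex_sum; apply: eq_bigr => l _; rewrite mxE.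
  case: (T l); last by rewrite mul0r.
  by rewrite W_coord [P l j]Complex_eta Complex_mul /frame /=; congr Complex; ring.
have norm_zP : (z *m P *m (z *m P)^t* ) 0 0 =
    (\sum_l (if T l then wa i l ^+ 2 + wb i l ^+ 2 else 0)) +i* (\sum_(l < n) 0).
  rewrite trmx_mul map_mxM !mulmxA -(mulmxA z P) P_Pt mulmx1.
  rewrite mxE -Complex_sum; apply: eq_bigr => l _.
  have -> : (z ^t* ) l 0 = conjC (z 0 l) by rewrite !mxE.
  rewrite mxE; case: (T l); last by rewrite mul0r.
  by rewrite W_coord Complex_conj Complex_mul; congr Complex; ring.
have norm_zP_coord : (z *m P *m (z *m P)^t* ) 0 0 =
    (\sum_j (x j ^+ 2 + y j ^+ 2)) +i* (\sum_(j < n) 0).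
  rewrite mxE -Complex_sum; apply: eq_bigr => j _.
  have -> : ((z *m P) ^t* ) j 0 = conjC ((z *m P) 0 j) by rewrite !mxE.
  by rewrite zP Complex_conj Complex_mul; congr Complex; ring.
have := congr1 (@Re R) (etrans (esym norm_zP) norm_zP_coord); rewrite /= => sum_eq.
rewrite [X in _ <= X]big_mkcond sum_eq; apply: ler_sum => j _.
by rewrite /x -big_mkcond lerDl sqr_ge0.
Qed.

Lemma char_poly_gram : char_poly (X^T *m X) = \prod_l ('X - (gram_eig l)%:P).
Proof.
apply: (map_poly_inj (real_complex R)).
rewrite map_char_poly map_mxM -map_trmx -/Xc -/Gc Gc_spectral char_poly_similar //.
rewrite char_poly_trig ?diag_mx_is_trig // rmorph_prod; apply: eq_bigr => l _.
by rewrite rmorphB /= map_polyX map_polyC /= mxE eqxx mulr1n sp_real.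
Qed.

End GramSpectralFrame.

Lemma nucnorm_gram_eig (R : realType) m n (X : 'M[R]_(m, n)) :
  nucnorm X = \sum_l Num.sqrt (gram_eig X l).
Proof.
set s0 := [seq Num.sqrt (gram_eig X l) | l <- enum 'I_n].
have s0_sv : is_singular_values X s0.
  split; first by apply/allP => x /mapP [l _ ->]; rewrite sqrtr_ge0.
  rewrite char_poly_gram big_map big_enum /=; apply: eq_bigr => l _.
  by rewrite sqr_sqrtr ?gram_eig_ge0.
rewrite /nucnorm; set s := xget _ _.
have [s_ge0 s_char] : is_singular_values X s by apply: (xgetPex [::]); exists s0.
have s_perm : perm_eq [seq x ^+ 2 | x <- s] [seq gram_eig X l | l <- enum 'I_n].
  by apply: prod_XsubC_eq; rewrite big_map -s_char char_poly_gram big_map big_enum.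
have -> : \sum_l Num.sqrt (gram_eig X l)
          = \sum_(y <- [seq gram_eig X l | l <- enum 'I_n]) Num.sqrt y.
  by rewrite big_map big_enum.
rewrite -(perm_big _ s_perm) big_map.
apply: eq_big_seq => x xs.
by rewrite sqrtr_sqr ger0_norm //; move/allP: s_ge0; apply.
Qed.

Section RealInequalities.
Variable R : realFieldType.

Lemma CauchySchwarz_sum (I : finType) (f g : I -> R) :
  (\sum_i f i * g i) ^+ 2 <= (\sum_i f i ^+ 2) * (\sum_i g i ^+ 2).
Proof.
set A := \sum_i f i ^+ 2; set B := \sum_i g i ^+ 2; set C := \sum_i f i * g i.
have inner i : \sum_j (f i * g j - f j * g i) ^+ 2
    = f i ^+ 2 * B + g i ^+ 2 * A - 2 * (f i * g i) * C.
  by rewrite /A /B /C !mulr_sumr -big_split -sumrB /=; apply: eq_bigr => j _; ring.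
have lagrange : \sum_i \sum_j (f i * g j - f j * g i) ^+ 2 = 2 * (A * B) - 2 * C ^+ 2.
  rewrite (eq_bigr _ (fun i _ => inner i)) sumrB big_split /= -!mulr_suml -mulr_sumr.
  by rewrite -/A -/B -/C; ring.
have : 0 <= \sum_i \sum_j (f i * g j - f j * g i) ^+ 2.
  by apply: sumr_ge0 => i _; apply: sumr_ge0 => j _; apply: sqr_ge0.
by rewrite lagrange; lra.
Qed.

Lemma sum_sqr_le_card (I : finType) (f : I -> R) :
  (forall i, `|f i| <= 1) -> \sum_i f i ^+ 2 <= #|I|%:R.
Proof.
move=> f_le1; rewrite -sumr_const; apply: ler_sum => i _.
by rewrite -real_normK ?num_real // expr_le1 ?normr_ge0.
Qed.

Lemma sqrD_le (c x y : R) : 0 < c ->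
  (x + y) ^+ 2 <= (1 + c) * x ^+ 2 + (1 + c^-1) * y ^+ 2.
Proof.
move=> c_gt0; have cV : c * c^-1 = 1 by rewrite divff ?gt_eqF.
have cV_gt0 : 0 < c^-1 by rewrite invr_gt0.
have := sqr_ge0 (c * x - y); nra.
Qed.

Lemma normr_mulB_le (x x' y y' : R) :
  `|x * y - x' * y'| <= `|x| * `|y - y'| + `|x - x'| * `|y'|.
Proof.
have -> : x * y - x' * y' = x * (y - y') + (x - x') * y' by ring.
by rewrite -!normrM ler_normD.
Qed.

Lemma sum_const_ord2 m n (c : R) : \sum_(i < m) \sum_(j < n) c = c * (m * n)%:R.
Proof.
under eq_bigr do rewrite sumr_const card_ord.
by rewrite sumr_const card_ord -mulrnA mulr_natr mulnC.
Qed.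

Definition clip (y : R) : R := if y <= -1 then -1 else if 1 <= y then 1 else y.

Lemma clip_cases y : [\/ 1 <= y /\ clip y = 1, y <= -1 /\ clip y = -1
                      | -1 <= y <= 1 /\ clip y = y].
Proof.
rewrite /clip; have [y_le|y_gt] := leP y (-1); first by constructor 2.
have [y_ge|y_lt] := leP 1 y; first by constructor 1.
by constructor 3; split => //; apply/andP; lra.
Qed.

Lemma normr_clip_le1 y : `|clip y| <= 1.
Proof.
by rewrite ler_norml; case: (clip_cases y) => [[_ ->]|[_ ->]|[/andP [? ?] ->]];
  apply/andP; lra.
Qed.

Lemma sqr_sub_clip_le x y : `|x| <= 1 -> (x - clip y) ^+ 2 <= (x - y) ^+ 2.
Proof.
rewrite ler_norml => /andP [? ?].
by case: (clip_cases y) => [[? ->]|[? ->]|[/andP [? ?] ->]]; nra.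
Qed.

End RealInequalities.

Section Quantization.
Variable R : archiRealFieldType.

(* Rounds [x] down to the grid [h * Z], recording the grid point by its
   offset in [0, 2M]; the grid covers [-M h, M h]. *)
Definition quantize (M : nat) (h x : R) : 'I_(2 * M).+1 :=
  inord (Num.truncn (x / h + M%:R)).

Definition dequantize (M : nat) (h : R) (k : 'I_(2 * M).+1) : R :=
  ((k : nat)%:R - M%:R) * h.

Lemma dequantize_quantize M (h x : R) : 0 < h -> `|x| <= M%:R * h ->
  `|x - dequantize h (quantize M h x)| <= h.
Proof.
move=> h_gt0 x_le.
have : `|x / h| <= M%:R by rewrite normf_div (gtr0_norm h_gt0) ler_pdivrMr.
rewrite ler_norml => /andP [xh_ge xh_le].
have y_ge0 : 0 <= x / h + M%:R by lra.
have /andP [t_le t_gt] := truncn_itv y_ge0.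
set k := Num.truncn _ in t_le t_gt.
have k_le : (k < (2 * M).+1)%N by rewrite ltnS -(ler_nat R) natrM; lra.
rewrite /dequantize /quantize -/k inordK // -[X in `|X - _|](mulfVK (lt0r_neq0 h_gt0)).
rewrite -mulrBl normrM (gtr0_norm h_gt0); apply: ler_piMl; first exact: ltW.
rewrite ler_norml; move: t_gt; rewrite -natr1 => t_gt; apply/andP; split; lra.
Qed.

Lemma quantized_sum_error k M (a b : 'I_k -> R) (A B ha hb : R) :
  0 < ha -> 0 < hb -> A <= M%:R * ha -> B <= M%:R * hb ->
  (forall r, `|a r| <= A) -> (forall r, `|b r| <= B) ->
  `|\sum_r a r * b r
    - \sum_r dequantize ha (quantize M ha (a r)) * dequantize hb (quantize M hb (b r))|
  <= k%:R * (A * hb + ha * (B + hb)).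
Proof.
move=> ha_gt0 hb_gt0 A_le B_le a_le b_le.
rewrite -sumrB -[k in k%:R]card_ord mulr_natl -sumr_const.
apply: le_trans (ler_norm_sum _ _ _) _.
apply: ler_sum => r _; apply: le_trans (normr_mulB_le _ _ _ _) _.
have qa := dequantize_quantize ha_gt0 (le_trans (a_le r) A_le).
have qb := dequantize_quantize hb_gt0 (le_trans (b_le r) B_le).
apply: lerD; apply: ler_pM => //.
set bq := dequantize hb _.
by rewrite -(subKr (b r) bq) (le_trans (ler_normB _ _)) // lerD.
Qed.

End Quantization.

Lemma sorting_perm m (key : 'I_m -> nat) :
  exists pi : {perm 'I_m}, {homo key \o pi : i j / (i <= j)%N}.
Proof.
pose le := [rel i j : 'I_m | key i <= key j]%N.
pose s := sort le (enum 'I_m).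
have s_perm : perm_eq s (enum 'I_m) by rewrite perm_sort.
have s_size : size s = m by rewrite (perm_size s_perm) size_enum_ord.
have : perm_eq (Tuple (introT eqP s_size)) (ord_tuple m) by [].
case/tuple_permP => pi s_pi.
have piE i : pi i = nth i s i.
  have := congr1 (fun t : seq 'I_m => nth i t i) s_pi.
  by rewrite /= (nth_map i) ?size_enum_ord // nth_ord_enum tnth_ord_tuple => /esym.
exists pi => i j ij /=; rewrite !piE (set_nth_default i j) ?s_size //.
apply: (sorted_leq_nth (leT := le)) => //.
- by move=> x y z; apply: leq_trans.
- by move=> x; apply: leqnn.
- by apply: sort_sorted => x y; apply: leq_total.
- by rewrite inE s_size.
- by rewrite inE s_size.
Qed.

Section LabelledMatrices.
Variable R : realType.

Definition label_mx m n (T1 T2 : Type) (rl : 'I_m -> T1) (cl : 'I_n -> T2)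
  (F : T1 -> T2 -> R) : 'M[R]_(m, n) := \matrix_(i, j) F (rl i) (cl j).

Lemma label_mx_simul_block_structure m n (T1 T2 : finType)
    (rl : 'I_m -> T1) (cl : 'I_n -> T2) (F G : T1 -> T2 -> R) (N : R) :
  (#|T1| * #|T2|)%:R <= N ->
  exists (pi : {perm 'I_m}) (tau : {perm 'I_n}),
    simul_block_structure (permmx (label_mx rl cl F) pi tau)
      (permmx (label_mx rl cl G) pi tau) N.
Proof.
move=> card_le.
have [pi pi_homo] := sorting_perm (fun i => enum_rank (rl i) : nat).
have [tau tau_homo] := sorting_perm (fun j => enum_rank (cl j) : nat).
exists pi, tau, #|T1|, #|T2|, (fun i => enum_rank (rl (pi i))),
  (fun j => enum_rank (cl (tau j))); split => // i i' j j'.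
by move=> /enum_rank_inj rl_eq /enum_rank_inj cl_eq; rewrite !mxE rl_eq cl_eq.
Qed.

Lemma ler_maxnorm m n (A : 'M[R]_(m, n)) i j : `|A i j| <= maxnorm A.
Proof.
apply: le_trans (le_bigmax _ _ i).
exact: (le_bigmax _ (fun j => `|A i j|) j).
Qed.

Lemma maxnorm_le m n (A : 'M[R]_(m, n)) c :
  0 <= c -> (forall i j, `|A i j| <= c) -> maxnorm A <= c.
Proof.
by move=> c_ge0 A_le; apply: bigmax_le => // i _; apply: bigmax_le.
Qed.

Lemma permmxB m n (A B : 'M[R]_(m, n)) pi tau :
  permmx (A - B) pi tau = permmx A pi tau - permmx B pi tau.
Proof. by apply/matrixP => i j; rewrite !mxE. Qed.

Lemma fbarnorm_permmx m n (A : 'M[R]_(m, n)) pi tau :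
  fbarnorm (permmx A pi tau) = fbarnorm A.
Proof.
rewrite /fbarnorm; congr (Num.sqrt (_ * _)).
rewrite [RHS](reindex_inj (@perm_inj _ pi)); apply: eq_bigr => i _.
by rewrite [RHS](reindex_inj (@perm_inj _ tau)); apply: eq_bigr => j _; rewrite mxE.
Qed.

Lemma fbarnorm_le m n (A : 'M[R]_(m, n)) (eps : R) : 0 <= eps ->
  \sum_i \sum_j A i j ^+ 2 <= eps ^+ 2 * (m * n)%:R -> fbarnorm A <= eps.
Proof.
move=> eps_ge0 A_le; rewrite /fbarnorm -(ger0_norm eps_ge0) -sqrtr_sqr.
rewrite ler_sqrt ?sqr_ge0 //; have [->|mn_gt0] := posnP (m * n).
  by rewrite invr0 mul0r sqr_ge0.
by rewrite ler_pdivrMl ?ltr0n // mulrC.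
Qed.

End LabelledMatrices.

(* [1 / quant_levels q eps] is the relative quantisation step, chosen below
   [eps^5 / (64 q^3)] so that the quantised rank-[k] sum stays within [eps / 10]. *)
Definition quant_levels (R : realType) (q eps : R) : nat :=
  (Num.truncn (64 * q ^+ 3 / eps ^+ 5)).+1.

Notation quant_grid q eps := (2 * quant_levels q eps).+1.
Notation quant_labels k q eps := {ffun 'I_k -> 'I_(quant_grid q eps)}.

Section BlockCount.
Variable R : realType.

Lemma quant_levels_gt (q eps : R) : 64 * q ^+ 3 / eps ^+ 5 < (quant_levels q eps)%:R.
Proof. exact: truncnS_gt. Qed.

Lemma quant_grid_sqr_le (q eps : R) : 1 <= q -> 0 < eps < 1 ->
  ((quant_grid q eps ^ 2)%N%:R : R) <= 20000 * q ^+ 6 * eps ^- 10.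
Proof.
move=> q_ge1 /andP [eps_gt0 eps_lt1].
set x := q ^+ 3 / eps ^+ 5.
have x_ge1 : 1 <= x.
  rewrite /x ler_pdivlMr ?exprn_gt0 // mul1r.
  by apply: le_trans (exprn_ege1 _ q_ge1); rewrite exprn_ile1 // ltW.
have M_le : (quant_levels q eps)%:R <= 64 * x + 1.
  rewrite /quant_levels -natr1 lerD2r /x mulrA truncn_le.
  by rewrite mulr_ge0 ?invr_ge0 ?exprn_ge0 ?mulr_ge0 // ltW // (lt_le_trans ltr01).
have G_le : (((2 * quant_levels q eps).+1)%:R : R) <= 131 * x.
  by rewrite -natr1 natrM; lra.
have -> : 20000 * q ^+ 6 * eps ^- 10 = 20000 * x ^+ 2.
  by rewrite /x; field; rewrite gt_eqF ?exprn_gt0.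
have G_ge0 : 0 <= (((2 * quant_levels q eps).+1)%:R : R) by [].
by rewrite natrX; nra.
Qed.

Lemma card_label_pairs_le (q eps : R) (kX kY : nat) : 1 <= q -> 0 < eps < 1 ->
  2 * kX%:R * eps ^+ 2 <= 5 * q ^+ 2 -> 2 * kY%:R * eps ^+ 2 <= 5 * q ^+ 2 ->
  let Lab := (quant_labels kX q eps * quant_labels kY q eps)%type in
  ((#|{: Lab}| * #|{: Lab}|)%N%:R : R)
  <= powR (20000 * q ^+ 6 * eps ^- 10) (5 * q ^+ 2 * eps ^- 2).
Proof.
move=> q_ge1 eps_01 kX_le kY_le /=; have /andP [eps_gt0 _] := eps_01.
rewrite card_prod !card_ffun !card_ord.
have G2_le := quant_grid_sqr_le q_ge1 eps_01.
set base := 20000 * q ^+ 6 * eps ^- 10 in G2_le *.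
have base_ge1 : 1 <= base by apply: le_trans G2_le; rewrite ler1n expn_gt0.
rewrite -expnD -expnMn mulnn natrX.
apply: (@le_trans _ _ (base ^+ (kX + kY))).
  by rewrite lerXn2r ?nnegrE ?ler0n ?(le_trans ler01).
rewrite -powR_mulrn ?(le_trans ler01) //; apply: ler_powR => //.
by rewrite natrD ler_pdivlMr ?exprn_gt0 //; lra.
Qed.

End BlockCount.

Lemma quant_error_le (R : realType) (q eps : R) (k : nat) : 1 <= q -> 0 < eps < 1 ->
  2 * k%:R * eps ^+ 2 <= 5 * q ^+ 2 ->
  k%:R * (2 + (quant_levels q eps)%:R^-1) * (quant_levels q eps)%:R^-1
    * (5 * q / (4 * eps ^+ 2)) <= eps / 10.
Proof.
move=> q_ge1 /andP [eps_gt0 eps_lt1] k_le; set u := (quant_levels q eps)%:R^-1.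
have q_gt0 : 0 < q by rewrite (lt_le_trans ltr01).
have q3_gt0 : 0 < q ^+ 3 by rewrite exprn_gt0.
have eps5_gt0 : 0 < eps ^+ 5 by rewrite exprn_gt0.
have u_le : u <= eps ^+ 5 / (64 * q ^+ 3).
  rewrite /u -[leRHS]invf_div lef_pV2 ?posrE ?ltr0n ?divr_gt0 ?mulr_gt0 //.
  exact/ltW/quant_levels_gt.
have u_ge0 : 0 <= u by rewrite invr_ge0.
have eps5_le : eps ^+ 5 <= 1 by rewrite exprn_ile1 // ltW.
have u_le64 : u <= 1 / 64.
  apply: le_trans u_le _; rewrite ler_pdivrMr ?mulr_gt0 // mul1r.
  by have := exprn_ege1 3 q_ge1; lra.
have k_le' : k%:R <= 5 * q ^+ 2 / (2 * eps ^+ 2).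
  by rewrite ler_pdivlMr ?mulr_gt0 ?exprn_gt0 // mulrCA mulrA.
have ku_le : k%:R * u <= 5 * q ^+ 2 / (2 * eps ^+ 2) * (eps ^+ 5 / (64 * q ^+ 3)).
  by apply: ler_pM.
have c_ge0 : 0 <= 5 * q / (4 * eps ^+ 2) by rewrite divr_ge0 ?mulr_ge0 ?ltW.
have q_neq0 := lt0r_neq0 q_gt0; have eps_neq0 := lt0r_neq0 eps_gt0.
have kuc_le : k%:R * u * (5 * q / (4 * eps ^+ 2)) <= 25 * eps / 512.
  apply: le_trans (ler_wpM2r c_ge0 ku_le) _.
  by rewrite [leLHS](_ : _ = 25 * eps / 512); last by field; rewrite eps_neq0 q_neq0.
have kuc_ge0 : 0 <= k%:R * u * (5 * q / (4 * eps ^+ 2)).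
  by apply/mulr_ge0/c_ge0/mulr_ge0.
have -> : k%:R * (2 + u) * u * (5 * q / (4 * eps ^+ 2))
          = (2 + u) * (k%:R * u * (5 * q / (4 * eps ^+ 2))) by ring.
by nra.
Qed.

Section LowRankApproximation.
Variables (R : realType) (m n : nat) (X : 'M[R]_(m, n)).
Local Notation d := (gram_eig X).
Local Notation w := (frame_coef X).
Local Notation v := (frame X).

Lemma card_large_gram_eig_le (t : R) : 0 <= t ->
  #|[pred l | t <= d l]|%:R * Num.sqrt t <= nucnorm X.
Proof.
move=> t_ge0; set S := [pred l | t <= d l].
rewrite nucnorm_gram_eig (bigID (mem S)) /= -[X in X <= _]addr0 lerD //.
  rewrite mulr_natl -sumr_const; apply: ler_sum => l t_le.
  by rewrite ler_sqrt // gram_eig_ge0.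
by apply: sumr_ge0 => l _; apply: sqrtr_ge0.
Qed.

Lemma sum_small_gram_eig_le (t : R) : 0 <= t ->
  \sum_(l | d l < t) d l <= Num.sqrt t * nucnorm X.
Proof.
move=> t_ge0.
apply: (@le_trans _ _ (Num.sqrt t * \sum_(l | d l < t) Num.sqrt (d l))).
  rewrite mulr_sumr; apply: ler_sum => l d_lt.
  rewrite -{1}(sqr_sqrtr (gram_eig_ge0 X l)) expr2.
  by rewrite ler_wpM2r ?sqrtr_ge0 // ler_sqrt // ltW.
rewrite nucnorm_gram_eig [X in _ <= _ * X](bigID (fun l => d l < t)) /=.
by rewrite ler_wpM2l ?sqrtr_ge0 // lerDl sumr_ge0 // => l _; apply: sqrtr_ge0.
Qed.

Lemma truncation_error (T : pred 'I_n) :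
  \sum_i \sum_j (X i j - \sum_(p | T p.1) w i p * v p j) ^+ 2
  <= \sum_(l | ~~ T l) d l.
Proof.
have -> : \sum_(l | ~~ T l) d l = \sum_i \sum_(p | ~~ T p.1) w i p ^+ 2.
  under [RHS]eq_bigr do rewrite (sum_pair_bool (predC T)).
  by rewrite exchange_big; apply: eq_bigr => l _; rewrite sum_frame_coef_sqr.
apply: ler_sum => i _.
under eq_bigr => j _ do
  rewrite [X i j]frame_expansion (bigID (fun p => T p.1)) /= addrAC subrr add0r.
exact: (frame_bessel X i (predC T)).
Qed.

Hypothesis X_le1 : forall i j, `|X i j| <= 1.

Lemma normr_frame_coef_le i p : `|w i p| <= Num.sqrt n%:R.
Proof.
rewrite -sqrtr_sqr ler_sqrt ?ler0n //; apply: le_trans (CauchySchwarz_sum _ _) _.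
rewrite -[n%:R]mulr1; apply: ler_pM.
- by apply: sumr_ge0 => j _; apply: sqr_ge0.
- by apply: sumr_ge0 => j _; apply: sqr_ge0.
- by rewrite -[n in n%:R]card_ord; apply: sum_sqr_le_card.
- exact: sum_frame_sqr_le.
Qed.

Lemma normr_frame_mul_sqrt_le p j : `|v p j| * Num.sqrt (d p.1) <= Num.sqrt m%:R.
Proof.
rewrite -sqrtr_sqr -sqrtrM ?sqr_ge0 // ler_sqrt ?ler0n //.
have [d0|d_gt0] := eqVneq (d p.1) 0; first by rewrite d0 mulr0.
have vd_le : (v p j * d p.1) ^+ 2 <= m%:R * d p.1.
  rewrite -frame_adjoint; apply: le_trans (CauchySchwarz_sum _ _) _.
  apply: ler_pM.
  - by apply: sumr_ge0 => i _; apply: sqr_ge0.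
  - by apply: sumr_ge0 => i _; apply: sqr_ge0.
  - by rewrite -[m in m%:R]card_ord; apply: sum_sqr_le_card => i; apply: X_le1.
  - exact: sum_frame_coef_sqr_le.
have d_pos : 0 < d p.1 by rewrite lt_def d_gt0 gram_eig_ge0.
by rewrite -(ler_pM2r d_pos) -mulrA -expr2 -exprMn.
Qed.

Lemma normr_frame_large_le (s : R) p j : 0 < s -> (0 < m)%N ->
  s ^+ 2 * (m * n)%:R <= d p.1 -> `|v p j| <= (s * Num.sqrt n%:R)^-1.
Proof.
move=> s_gt0 m_gt0 d_ge.
have n_gt0 : (0 < n)%N by apply: leq_ltn_trans (ltn_ord j).
have sn_gt0 : 0 < s * Num.sqrt n%:R by apply: mulr_gt0; rewrite // sqrtr_gt0 ltr0n.
have sm_gt0 : 0 < Num.sqrt (m%:R : R) by rewrite sqrtr_gt0 ltr0n.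
have d_sqrt : s * Num.sqrt n%:R * Num.sqrt m%:R <= Num.sqrt (d p.1).
  rewrite -(ger0_norm (ltW s_gt0)) -sqrtr_sqr -sqrtrM ?sqr_ge0 // -sqrtrM.
    by rewrite ler_sqrt ?gram_eig_ge0 // -mulrA -natrM mulnC.
  by rewrite mulr_ge0 ?sqr_ge0.
rewrite -[leRHS]mul1r ler_pdivlMr // -(ler_pM2r sm_gt0) mul1r -mulrA.
apply: le_trans (normr_frame_mul_sqrt_le p j); apply: ler_wpM2l => //.
Qed.

Section Construction.
Variables (q eps : R).
Hypotheses (q_ge1 : 1 <= q) (nucX_le : nucnorm X <= q * Num.sqrt (m * n)%:R).
Hypotheses (eps_gt0 : 0 < eps) (eps_lt1 : eps < 1) (mn_gt0 : (0 < m * n)%N).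

Let s := 4 * eps ^+ 2 / (5 * q).
Let t := s ^+ 2 * (m * n)%:R.
Let T := [pred l | t <= d l].
Let S := [pred p : 'I_n * bool | T p.1].
Let k := #|S|.
Let M := quant_levels q eps.
Let B := (s * Num.sqrt n%:R)^-1.
Let hr : R := Num.sqrt n%:R / M%:R.
Let hc := B / M%:R.
Let L i j := \sum_(p | T p.1) w i p * v p j.
Let rl i : quant_labels k q eps := [ffun r => quantize M hr (w i (enum_val r))].
Let cl j : quant_labels k q eps := [ffun r => quantize M hc (v (enum_val r) j)].
Let Fq (u u' : quant_labels k q eps) :=
  \sum_r dequantize hr (u r) * dequantize hc (u' r).

Let q_gt0 : 0 < q. Proof. by rewrite (lt_le_trans ltr01). Qed.
Let s_gt0 : 0 < s. Proof. by rewrite divr_gt0 ?mulr_gt0 ?exprn_gt0. Qed.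
Let t_ge0 : 0 <= t. Proof. by rewrite mulr_ge0 ?sqr_ge0. Qed.
Let sqrt_t : Num.sqrt t = s * Num.sqrt (m * n)%:R.
Proof. by rewrite sqrtrM ?sqr_ge0 // sqrtr_sqr ger0_norm // ltW. Qed.

Lemma card_selected_le : 2 * k%:R * eps ^+ 2 <= 5 * q ^+ 2.
Proof.
have k_eq : k = (#|T| * 2)%N.
  by rewrite -card_bool -cardX; apply: eq_card => -[l c]; rewrite !inE andbT.
have sqrt_mn_gt0 : 0 < Num.sqrt ((m * n)%:R : R) by rewrite sqrtr_gt0 ltr0n.
have T_le : #|T|%:R * s <= q.
  rewrite -(ler_pM2r sqrt_mn_gt0) -mulrA -sqrt_t (le_trans _ nucX_le) //.
  exact: card_large_gram_eig_le.
have -> : 2 * k%:R * eps ^+ 2 = 5 * q * (#|T|%:R * s).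
  by rewrite k_eq natrM /s; field; rewrite gt_eqF.
have q5_gt0 : 0 < 5 * q by have := q_gt0; lra.
by nra.
Qed.

Lemma low_rank_sqr_error : \sum_i \sum_j (X i j - L i j) ^+ 2 <= s * q * (m * n)%:R.
Proof.
apply: le_trans (truncation_error T) _.
have -> : \sum_(l | ~~ T l) d l = \sum_(l | d l < t) d l.
  by apply: eq_bigl => l; rewrite !inE -ltNge.
apply: le_trans (sum_small_gram_eig_le t_ge0) _.
have mn_ge0 : 0 <= ((m * n)%:R : R) by [].
rewrite sqrt_t -[X in _ <= _ * X](sqr_sqrtr mn_ge0) expr2.
have -> : forall a : R, s * q * (a * a) = s * a * (q * a) by move=> a; ring.
by apply: ler_wpM2l nucX_le; rewrite mulr_ge0 ?sqrtr_ge0 ?ltW.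
Qed.

Lemma quantized_entry_error i j : `|L i j - Fq (rl i) (cl j)| <= eps / 10.
Proof.
have -> : L i j = \sum_(r < k) w i (enum_val r) * v (enum_val r) j.
  rewrite -(big_enum_val (A := S) (fun p => w i p * v p j)).
  by apply: eq_bigl => p; rewrite inE.
rewrite /Fq; under [X in _ - X]eq_bigr => r _ do rewrite !ffunE.
have n_gt0 : (0 < n)%N by move: mn_gt0; rewrite muln_gt0 => /andP [].
have m_gt0 : (0 < m)%N by move: mn_gt0; rewrite muln_gt0 => /andP [].
have sqrt_n_gt0 : 0 < Num.sqrt (n%:R : R) by rewrite sqrtr_gt0 ltr0n.
have M_gt0 : (0 < M)%N by [].
have B_gt0 : 0 < B by rewrite invr_gt0 mulr_gt0.
have hr_gt0 : 0 < hr by rewrite divr_gt0 ?ltr0n.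
have hc_gt0 : 0 < hc by rewrite divr_gt0 ?ltr0n.
have M_hr : Num.sqrt n%:R <= M%:R * hr by rewrite mulrC divfK ?lt0r_neq0 ?ltr0n.
have M_hc : B <= M%:R * hc by rewrite mulrC divfK ?lt0r_neq0 ?ltr0n.
apply: le_trans (quantized_sum_error hr_gt0 hc_gt0 M_hr M_hc _ _) _.
- by move=> r; apply: normr_frame_coef_le.
- move=> r; apply: normr_frame_large_le => //.
  by have := enum_valP r; rewrite inE.
have -> : k%:R * (Num.sqrt n%:R * hc + hr * (B + hc))
          = k%:R * (2 + M%:R^-1) * M%:R^-1 * (5 * q / (4 * eps ^+ 2)).
  rewrite /hc /hr /B /s; field.
  rewrite (lt0r_neq0 eps_gt0) (lt0r_neq0 q_gt0) (lt0r_neq0 sqrt_n_gt0).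
  by rewrite pnatr_eq0 -lt0n.
by apply: quant_error_le card_selected_le; rewrite // eps_gt0.
Qed.

Lemma clip_quantized_sqr_error :
  \sum_i \sum_j (X i j - clip (Fq (rl i) (cl j))) ^+ 2 <= eps ^+ 2 * (m * n)%:R.
Proof.
set c : R := 3 / 20.
have c_gt0 : 0 < c by rewrite /c divr_gt0.
apply: (@le_trans _ _ (\sum_i \sum_j ((1 + c) * (X i j - L i j) ^+ 2
                          + (1 + c^-1) * (L i j - Fq (rl i) (cl j)) ^+ 2))).
  apply: ler_sum => i _; apply: ler_sum => j _.
  apply: le_trans (sqr_sub_clip_le _ (X_le1 i j)) _.
  have -> : X i j - Fq (rl i) (cl j) = (X i j - L i j) + (L i j - Fq (rl i) (cl j)).
    by rewrite addrA subrK.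
  exact: sqrD_le.
under eq_bigr do rewrite big_split /= -!mulr_sumr.
rewrite big_split /= -!mulr_sumr.
have quant_le : \sum_i \sum_j (L i j - Fq (rl i) (cl j)) ^+ 2
                 <= (eps / 10) ^+ 2 * (m * n)%:R.
  rewrite -sum_const_ord2; apply: ler_sum => i _; apply: ler_sum => j _.
  rewrite -real_normK ?num_real // lerXn2r ?nnegrE ?quantized_entry_error //.
  by rewrite divr_ge0 ?ltW.
have trunc_le := low_rank_sqr_error.
have sq : s * q * (m * n)%:R = 4 / 5 * (eps ^+ 2 * (m * n)%:R).
  by rewrite /s; field; rewrite lt0r_neq0.
have eps10 : (eps / 10) ^+ 2 * (m * n)%:R = 1 / 100 * (eps ^+ 2 * (m * n)%:R) by field.
have cV : 1 + c^-1 = 23 / 3 by rewrite /c invf_div; field.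
have err_ge0 : 0 <= eps ^+ 2 * (m * n)%:R by rewrite mulr_ge0 ?sqr_ge0.
rewrite sq in trunc_le; rewrite eps10 in quant_le; rewrite cV /c; lra.
Qed.

Lemma labelled_approx_mn_gt0 :
  exists (k : nat) (rl : 'I_m -> quant_labels k q eps)
         (cl : 'I_n -> quant_labels k q eps) F,
    [/\ 2 * k%:R * eps ^+ 2 <= 5 * q ^+ 2, forall u u', `|F u u'| <= 1
      & fbarnorm (X - label_mx rl cl F) <= eps].
Proof.
exists k, rl, cl, (fun u u' => clip (Fq u u')); split.
- exact: card_selected_le.
- by move=> u u'; apply: normr_clip_le1.
apply: fbarnorm_le; first exact: ltW.
by under eq_bigr do under eq_bigr do rewrite !mxE; apply: clip_quantized_sqr_error.
Qed.

End Construction.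

Lemma labelled_approx (q eps : R) : 1 <= q -> nucnorm X <= q * Num.sqrt (m * n)%:R ->
  0 < eps < 1 ->
  exists (k : nat) (rl : 'I_m -> quant_labels k q eps)
         (cl : 'I_n -> quant_labels k q eps) F,
    [/\ 2 * k%:R * eps ^+ 2 <= 5 * q ^+ 2, forall u u', `|F u u'| <= 1
      & fbarnorm (X - label_mx rl cl F) <= eps].
Proof.
move=> q_ge1 nucX_le /andP [eps_gt0 eps_lt1].
have [mn0|mn_gt0] := posnP (m * n); last exact: labelled_approx_mn_gt0.
exists 0, (fun=> [ffun=> ord0]), (fun=> [ffun=> ord0]), (fun _ _ => 0); split.
- by rewrite mulr0 mul0r mulr_ge0 ?sqr_ge0.
- by move=> u u'; rewrite normr0.
- by rewrite /fbarnorm mn0 invr0 mul0r sqrtr0 ltW.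
Qed.

End LowRankApproximation.

Unset Implicit Arguments.

Theorem lemma7p2 (R : realType) (m n : nat) (X Y : 'M[R]_(m, n)) (q eps : R) :
  maxnorm X <= 1 -> maxnorm Y <= 1 ->
  1 <= q ->
  nucnorm X <= q * Num.sqrt (m * n)%:R ->
  nucnorm Y <= q * Num.sqrt (m * n)%:R ->
  0 < eps < 1 ->
  exists (A B : 'M[R]_(m, n)) (pi : {perm 'I_m}) (tau : {perm 'I_n}),
    [/\ simul_block_structure A B
          (powR (20000 * q ^+ 6 * eps ^- 10) (5 * q ^+ 2 * eps ^- 2)),
        fbarnorm (permmx X pi tau - A) <= eps,
        fbarnorm (permmx Y pi tau - B) <= eps,
        maxnorm A <= 1 & maxnorm B <= 1].
Proof.
move=> maxX maxY q_ge1 nucX nucY eps_01.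
have entry_le1 (Z : 'M[R]_(m, n)) : maxnorm Z <= 1 -> forall i j, `|Z i j| <= 1.
  by move=> maxZ i j; apply: le_trans (ler_maxnorm Z i j) maxZ.
have [kX [rlX [clX [FX [kX_le FX_le1 X_err]]]]] :=
  labelled_approx (entry_le1 X maxX) q_ge1 nucX eps_01.
have [kY [rlY [clY [FY [kY_le FY_le1 Y_err]]]]] :=
  labelled_approx (entry_le1 Y maxY) q_ge1 nucY eps_01.
pose rl i := (rlX i, rlY i); pose cl j := (clX j, clY j).
have [pi [tau blocks]] := label_mx_simul_block_structure rl cl
  (fun u u' => FX u.1 u'.1) (fun u u' => FY u.2 u'.2)
  (card_label_pairs_le q_ge1 eps_01 kX_le kY_le).
exists (permmx (label_mx rl cl (fun u u' => FX u.1 u'.1)) pi tau),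
  (permmx (label_mx rl cl (fun u u' => FY u.2 u'.2)) pi tau), pi, tau.
split => //.
- by rewrite -permmxB fbarnorm_permmx.
- by rewrite -permmxB fbarnorm_permmx.
- by apply: maxnorm_le => // i j; rewrite !mxE.
- by apply: maxnorm_le => // i j; rewrite !mxE.
Qed.
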